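(* Let $(\mathcal{G}(u_0,v_0),-\Omega^2\,du\,dv)$ with radial function $r$ and stress-energy components $T_{uu},T_{uv},T_{vv}$ be as described in the context, satisfying assumptions (I)–(VII). Suppose the marginally trapped tube $\mathcal{A}$ is nonempty and that condition (A), namely \[ T_{uv}\,\Omega^{-2} < \frac{1}{4r^2}, \] holds at every point of $\mathcal{A}$. Then each connected component of $\mathcal{A}$ is achronal and contains no ingoing null segments.
   Context: Fix double null coordinates $(u,v)$ on $\mathbb{R}^2$ with Minkowski metric $-du\,dv$, time-oriented so that $u$ and $v$ increase toward the future. For $u_0,v_0>0$ let $K(u_0,v_0)=[0,u_0]\times[v_0,\infty)$, $\mathcal{C}_{in}=[0,u_0]\times\{v_0\}$ and $\mathcal{C}_{out}=\{0\}\times[v_0,\infty)$; causal notions $J^\pm, I^\pm$ refer to $K(u_0,v_0)$ with the (conformal) metric. Let $\mathcal{G}(u_0,v_0)\subset K(u_0,v_0)$ be a globally hyperbolic, relatively open subset containing $\mathcal{C}_{in}\cup\mathcal{C}_{out}$, equipped with the metric $-\Omega^2\,du\,dv$ ($\Omega>0$ smooth), a smooth function $r\ge 0$ (the radial function) with $r>0$ on $\mathcal{C}_{in}\cup\mathcal{C}_{out}$, and smooth functions $T_{uu},T_{uv},T_{vv}$ (the components of the stress-energy tensor of the spherically symmetric spacetime $-\Omega^2du\,dv+r^2g_{S^2}$, with Einstein equations $R_{\alpha\beta}-\frac12Rg_{\alpha\beta}=2T_{\alpha\beta}$) such that $\partial_u(\Omega^{-2}\partial_u r)=-r\Omega^{-2}T_{uu}$,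 $\partial_v(\Omega^{-2}\partial_v r)=-r\Omega^{-2}T_{vv}$, $\partial_u m=2r^2\Omega^{-2}(T_{uv}\partial_u r-T_{uu}\partial_v r)$, $\partial_v m=2r^2\Omega^{-2}(T_{uv}\partial_v r-T_{vv}\partial_u r)$, where $m=\frac r2(1+4\Omega^{-2}\partial_u r\,\partial_v r)$ is the Hawking mass. Define the regular region $\mathcal{R}=\{\partial_v r>0,\partial_u r<0\}$, trapped region $\mathcal{T}=\{\partial_v r<0,\partial_u r<0\}$, and marginally trapped tube $\mathcal{A}=\{\partial_v r=0,\partial_u r<0\}$ (subsets of $\mathcal{G}(u_0,v_0)$). Let $r_+=\sup_{\mathcal{C}_{out}}r$, $m_+=\sup_{\mathcal{C}_{out}}m$. Assumptions: (I) $T_{uu},T_{uv},T_{vv}\ge0$ on $\mathcal{G}(u_0,v_0)$; (II) $J^-(\mathcal{G}(u_0,v_0))\subset\mathcal{G}(u_0,v_0)$; (III) $r\le r_+<\infty$ along $\mathcal{C}_{out}$; (IV) $0\le m\le m_+<\infty$ along $\mathcal{C}_{out}$; (V) $\partial_u r<0$ along $\mathcal{C}_{out}$; (VI) $\partial_v r>0$ along $\mathcal{C}_{out}$; (VII) (extension principle, closures taken in $K(u_0,v_0)$) if $p\in\overline{\mathcal{R}}$ and $q\in\overline{\mathcal{R}}\cap I^-(p)$ with $J^-(p)\cap J^+(q)\setminus\{p\}\subset\mathcal{R}\cup\mathcal{A}$, then $p\in\mathcal{R}\cup\mathcal{A}$. An ingoing null segment is a segment of a line $\{v=\text{const}\}$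 (direction $\partial_u$); outgoing null segments lie on lines $\{u=\text{const}\}$. *)

From Stdlib Require Import Reals List.
From Coquelicot Require Import Coquelicot.
Open Scope R_scope.

Definition Point := (R * R)%type.
Definition pset := Point -> Prop.

Definition at_ (f : R -> R -> R) (p : Point) : R := f (fst p) (snd p).

Definition du (f : R -> R -> R) : R -> R -> R :=
  fun u v => Derive (fun x => f x v) u.
Definition dv (f : R -> R -> R) : R -> R -> R :=
  fun u v => Derive (fun y => f u y) v.

(* Iterated partial derivatives (true = d/du, false = d/dv). *)
Fixpoint iterD (l : list bool) (f : R -> R -> R) : R -> R -> R :=
  match l with
  | nil => f
  | b :: l' => if b then du (iterD l' f) else dv (iterD l' f)
  end.

Definition open_set (U : pset) : Prop :=
  forall p, U p -> exists eps, 0 < eps /\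
    forall q : Point, Rabs (fst q - fst p) < eps -> Rabs (snd q - snd p) < eps -> U q.

Definition smooth_open (U : pset) (f : R -> R -> R) : Prop :=
  forall (l : list bool) (p : Point), U p ->
    ex_derive (fun x => iterD l f x (snd p)) (fst p) /\
    ex_derive (fun y => iterD l f (fst p) y) (snd p) /\
    continuous (fun q : R * R => iterD l f (fst q) (snd q)) p.

Definition smooth_on (S : pset) (f : R -> R -> R) : Prop :=
  exists U : pset, open_set U /\ (forall p, S p -> U p) /\ smooth_open U f.

Definition Kset (u0 v0 : R) : pset :=
  fun p => 0 <= fst p <= u0 /\ v0 <= snd p.
Definition Cin (u0 v0 : R) : pset :=
  fun p => 0 <= fst p <= u0 /\ snd p = v0.
Definition Cout (u0 v0 : R) : pset :=
  fun p => fst p = 0 /\ v0 <= snd p.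

(* Causal relations of K(u0,v0) with the (conformally flat) metric -Omega^2 du dv,
   time oriented by increasing u and v: future directed causal curves are exactly
   those along which u and v are nondecreasing, and K is a product of intervals. *)
Definition causal_le (q p : Point) : Prop := fst q <= fst p /\ snd q <= snd p.
Definition chron_lt (q p : Point) : Prop := fst q < fst p /\ snd q < snd p.

Definition Jminus (u0 v0 : R) (p : Point) : pset := fun x => Kset u0 v0 x /\ causal_le x p.
Definition Jplus (u0 v0 : R) (q : Point) : pset := fun x => Kset u0 v0 x /\ causal_le q x.
Definition Iminus (u0 v0 : R) (p : Point) : pset := fun x => Kset u0 v0 x /\ chron_lt x p.
Definition JminusSet (u0 v0 : R) (S : pset) : pset :=
  fun x => exists p, S p /\ Jminus u0 v0 p x.

Definition rel_open_in (u0 v0 : R) (G : pset) : Prop :=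
  exists U : pset, open_set U /\ forall p, G p <-> (Kset u0 v0 p /\ U p).

(* Global hyperbolicity of G in the 2-dimensional conformally flat setting:
   all causal diamonds J^+(p) ∩ J^-(q) (compact closed rectangles) with
   p, q in G lie in G. *)
Definition glob_hyp (u0 v0 : R) (G : pset) : Prop :=
  forall p q x, G p -> G q -> Jplus u0 v0 p x -> Jminus u0 v0 q x -> G x.

(* Closure in K(u0,v0) (K is closed in R^2). *)
Definition closureK (u0 v0 : R) (S : pset) : pset :=
  fun p => Kset u0 v0 p /\
    forall eps, 0 < eps -> exists q, S q /\ Rabs (fst q - fst p) < eps /\ Rabs (snd q - snd p) < eps.

Definition hawking_mass (Om r : R -> R -> R) : R -> R -> R :=
  fun u v => r u v / 2 * (1 + 4 * / (Om u v ^ 2) * du r u v * dv r u v).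

Definition regular (G : pset) (r : R -> R -> R) : pset :=
  fun p => G p /\ 0 < at_ (dv r) p /\ at_ (du r) p < 0.
Definition trapped (G : pset) (r : R -> R -> R) : pset :=
  fun p => G p /\ at_ (dv r) p < 0 /\ at_ (du r) p < 0.
Definition mtt (G : pset) (r : R -> R -> R) : pset :=
  fun p => G p /\ at_ (dv r) p = 0 /\ at_ (du r) p < 0.

Definition setup (u0 v0 : R) (G : pset) (Om r Tuu Tuv Tvv : R -> R -> R) : Prop :=
  0 < u0 /\ 0 < v0 /\
  (forall p, G p -> Kset u0 v0 p) /\
  rel_open_in u0 v0 G /\ glob_hyp u0 v0 G /\
  (forall p, Cin u0 v0 p -> G p) /\ (forall p, Cout u0 v0 p -> G p) /\
  smooth_on G Om /\ smooth_on G r /\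
  smooth_on G Tuu /\ smooth_on G Tuv /\ smooth_on G Tvv /\
  (forall p, G p -> 0 < at_ Om p) /\
  (forall p, G p -> 0 <= at_ r p) /\
  (forall p, Cin u0 v0 p \/ Cout u0 v0 p -> 0 < at_ r p) /\
  (* the Einstein equations in the stated form *)
  (forall p, G p ->
     at_ (du (fun u v => / (Om u v ^ 2) * du r u v)) p
       = - at_ r p * / (at_ Om p ^ 2) * at_ Tuu p) /\
  (forall p, G p ->
     at_ (dv (fun u v => / (Om u v ^ 2) * dv r u v)) p
       = - at_ r p * / (at_ Om p ^ 2) * at_ Tvv p) /\
  (forall p, G p ->
     at_ (du (hawking_mass Om r)) p
       = 2 * at_ r p ^ 2 * / (at_ Om p ^ 2)
           * (at_ Tuv p * at_ (du r) p - at_ Tuu p * at_ (dv r) p)) /\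
  (forall p, G p ->
     at_ (dv (hawking_mass Om r)) p
       = 2 * at_ r p ^ 2 * / (at_ Om p ^ 2)
           * (at_ Tuv p * at_ (dv r) p - at_ Tvv p * at_ (du r) p)).

Definition assumption_I (G : pset) (Tuu Tuv Tvv : R -> R -> R) : Prop :=
  forall p, G p -> 0 <= at_ Tuu p /\ 0 <= at_ Tuv p /\ 0 <= at_ Tvv p.
Definition assumption_II (u0 v0 : R) (G : pset) : Prop :=
  forall x, JminusSet u0 v0 G x -> G x.
Definition assumption_III (u0 v0 : R) (r : R -> R -> R) : Prop :=
  exists rp, forall p, Cout u0 v0 p -> at_ r p <= rp.
Definition assumption_IV (u0 v0 : R) (Om r : R -> R -> R) : Prop :=
  (forall p, Cout u0 v0 p -> 0 <= at_ (hawking_mass Om r) p) /\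
  exists mp, forall p, Cout u0 v0 p -> at_ (hawking_mass Om r) p <= mp.
Definition assumption_V (u0 v0 : R) (r : R -> R -> R) : Prop :=
  forall p, Cout u0 v0 p -> at_ (du r) p < 0.
Definition assumption_VI (u0 v0 : R) (r : R -> R -> R) : Prop :=
  forall p, Cout u0 v0 p -> 0 < at_ (dv r) p.
Definition assumption_VII (u0 v0 : R) (G : pset) (r : R -> R -> R) : Prop :=
  forall p q,
    closureK u0 v0 (regular G r) p ->
    closureK u0 v0 (regular G r) q -> Iminus u0 v0 p q ->
    (forall x, Jminus u0 v0 p x -> Jplus u0 v0 q x -> x <> p ->
        regular G r x \/ mtt G r x) ->
    regular G r p \/ mtt G r p.

Definition condition_A (G : pset) (Om r Tuv : R -> R -> R) : Prop :=
  forall p, mtt G r p ->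
    at_ Tuv p * / (at_ Om p ^ 2) < 1 / (4 * at_ r p ^ 2).

Definition connected (S : pset) : Prop :=
  ~ exists U V : pset, open_set U /\ open_set V /\
      (forall p, S p -> U p \/ V p) /\
      (exists p, S p /\ U p) /\ (exists p, S p /\ V p) /\
      (forall p, S p -> U p -> V p -> False).

Definition conn_component (S C : pset) : Prop :=
  (exists p, C p) /\ (forall p, C p -> S p) /\ connected C /\
  forall D : pset, connected D -> (forall p, C p -> D p) -> (forall p, D p -> S p) ->
    forall p, D p -> C p.

Definition achronal (S : pset) : Prop :=
  forall p q, S p -> S q -> ~ chron_lt p q.

Definition has_ingoing_segment (S : pset) : Prop :=
  exists a b v, a < b /\ forall u, a <= u <= b -> S (u, v).

From Stdlib Require Import Reals Lra Classical.
From Coquelicot Require Import Coquelicot.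
Open Scope R_scope.

(* Along an ingoing null line the sign of d_v r can only change from + to -.
   Indeed, the u-Raychaudhuri equation (T_uu >= 0) and (V) give d_u r < 0 on G,
   and at a point of A the u-equation for the Hawking mass reduces to
   d_u r (1/2 + 2 r Omega^-2 d_u d_v r - 2 r^2 Omega^-2 T_uv) = 0, so (A) forces
   d_u d_v r < 0 there.  A real-induction argument then shows that once d_v r <= 0
   on an ingoing line it is < 0 further along it, which rules out ingoing segments
   in A.  If p << q were both in A, the v-Raychaudhuri equation (T_vv >= 0) would
   give d_v r <= 0 at (u_p, v_q), hence d_v r < 0 at q.  So all of A is achronal. *)

Lemma lub_approx (E : R -> Prop) t y :
  is_lub E t -> y < t -> exists x, E x /\ y < x.
Proof.
  intros [_ Hleast] Hy.
  apply NNPP; intros Hno.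
  assert (Hub : is_upper_bound E y).
  { intros x Ex. apply Rnot_lt_le. intros Hxy. apply Hno. now exists x. }
  specialize (Hleast y Hub). lra.
Qed.

Lemma real_induction (P : R -> Prop) a b :
  a <= b -> P a ->
  (forall x, a <= x < b -> P x -> exists d, 0 < d /\ forall y, x < y < x + d -> P y) ->
  (forall x, a < x <= b -> (forall y, a <= y < x -> P y) -> P x) ->
  forall x, a <= x <= b -> P x.
Proof.
  intros Hab Ha Hstep Hlim.
  set (S := fun x => a <= x <= b /\ forall y, a <= y <= x -> P y).
  destruct (completeness S) as [t Ht].
  { exists b. intros x Sx. apply Sx. }
  { exists a. split; [lra|]. intros y Hy. replace y with a by lra. exact Ha. }
  assert (Hat : a <= t) by (apply Ht; split; [lra|]; intros y Hy; replace y with a by lra; exact Ha).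
  assert (Htb : t <= b) by (apply Ht; intros x Sx; apply Sx).
  assert (Hbelow : forall y, a <= y < t -> P y).
  { intros y Hy. destruct (lub_approx S t y Ht (proj2 Hy)) as [x [[_ Hx] Hyx]].
    apply Hx. lra. }
  assert (Hupto : forall y, a <= y <= t -> P y).
  { intros y Hy. destruct (Req_dec y t) as [->|Hne]; [|apply Hbelow; lra].
    destruct (Req_dec t a) as [->|Hta]; [exact Ha|].
    apply Hlim; [lra|]. exact Hbelow. }
  assert (Htb' : t = b).
  { destruct (Rle_lt_or_eq_dec t b Htb) as [Hlt|]; [exfalso|assumption].
    destruct (Hstep t (conj Hat Hlt) (Hupto t (conj Hat (Rle_refl t)))) as [d [Hd Hnext]].
    set (y := t + Rmin d (b - t) / 2).
    assert (0 < Rmin d (b - t) <= d) by (split; [apply Rmin_pos|apply Rmin_l]; lra).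
    assert (Rmin d (b - t) <= b - t) by apply Rmin_r.
    assert (Sy : S y).
    { split; [unfold y; lra|]. intros z Hz.
      destruct (Rle_dec z t); [apply Hupto; lra|apply Hnext; unfold y in *; lra]. }
    pose proof (proj1 Ht y Sy). unfold y in *. lra. }
  intros x Hx. apply Hupto. lra.
Qed.

Lemma ex_derive_continuity_pt (f : R -> R) x : ex_derive f x -> continuity_pt f x.
Proof. intros Hf. apply continuity_pt_filterlim. exact (ex_derive_continuous f x Hf). Qed.

Lemma ex_derive_near (f : R -> R) x eps :
  ex_derive f x -> 0 < eps ->
  exists d, 0 < d /\ forall y, Rabs (y - x) < d -> Rabs (f y - f x) < eps.
Proof.
  intros Hf Heps.
  destruct (ex_derive_continuity_pt f x Hf eps Heps) as [d [Hd Hnear]].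
  exists d. split; [exact Hd|]. intros y Hy.
  destruct (Req_dec y x) as [->|Hne].
  - rewrite Rminus_diag, Rabs_R0. exact Heps.
  - apply (Hnear y). split; [split; [exact I|auto]|exact Hy].
Qed.

Lemma is_derive_neg_crossing (f : R -> R) x l :
  is_derive f x l -> l < 0 ->
  exists d, 0 < d /\ forall h, 0 < h < d -> f (x + h) < f x < f (x - h).
Proof.
  intros Hf Hl. apply is_derive_Reals in Hf.
  destruct (Hf (- l / 2)) as [d Hd]; [lra|].
  exists d. split; [apply cond_pos|]. intros h Hh.
  assert (Hr : Rabs ((f (x + h) - f x) / h - l) < - l / 2).
  { apply Hd; [lra|]. rewrite Rabs_right; lra. }
  assert (Hlft : Rabs ((f (x + - h) - f x) / - h - l) < - l / 2).
  { apply Hd; [lra|]. rewrite Rabs_Ropp, Rabs_right; lra. }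
  apply Rabs_def2 in Hr, Hlft.
  replace (x + - h) with (x - h) in Hlft by ring.
  assert (Er : f (x + h) - f x = (f (x + h) - f x) / h * h) by (field; lra).
  assert (El : f (x - h) - f x = (f (x - h) - f x) / - h * - h) by (field; lra).
  split; nra.
Qed.

Lemma neg_right_of_nonpos (g : R -> R) x :
  ex_derive g x -> (g x = 0 -> Derive g x < 0) -> g x <= 0 ->
  exists d, 0 < d /\ forall h, 0 < h < d -> g (x + h) < 0.
Proof.
  intros Hg Hzero Hx. destruct (Rle_lt_or_eq_dec _ _ Hx) as [Hneg|Heq].
  - destruct (ex_derive_near g x (- g x) Hg) as [d [Hd Hnear]]; [lra|].
    exists d. split; [exact Hd|]. intros h Hh.
    assert (Habs : Rabs (g (x + h) - g x) < - g x) by (apply Hnear; rewrite Rabs_right; lra).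
    apply Rabs_def2 in Habs. lra.
  - destruct (is_derive_neg_crossing g x _ (Derive_correct g x Hg) (Hzero Heq))
      as [d [Hd Hcross]].
    exists d. split; [exact Hd|]. intros h Hh. specialize (Hcross h Hh). lra.
Qed.

Lemma pos_left_of_nonneg (g : R -> R) x :
  ex_derive g x -> (g x = 0 -> Derive g x < 0) -> 0 <= g x ->
  exists d, 0 < d /\ forall h, 0 < h < d -> 0 < g (x - h).
Proof.
  intros Hg Hzero Hx. destruct (Rle_lt_or_eq_dec _ _ Hx) as [Hpos|Heq].
  - destruct (ex_derive_near g x (g x) Hg) as [d [Hd Hnear]]; [lra|].
    exists d. split; [exact Hd|]. intros h Hh.
    assert (Habs : Rabs (g (x - h) - g x) < g x)
      by (apply Hnear; rewrite Rabs_left; lra).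
    apply Rabs_def2 in Habs. lra.
  - destruct (is_derive_neg_crossing g x _ (Derive_correct g x Hg) (Hzero (eq_sym Heq)))
      as [d [Hd Hcross]].
    exists d. split; [exact Hd|]. intros h Hh. specialize (Hcross h Hh). lra.
Qed.

Lemma neg_of_nonpos_with_downcrossing_zeros (g : R -> R) a b :
  a < b ->
  (forall x, a <= x <= b -> ex_derive g x) ->
  (forall x, a <= x <= b -> g x = 0 -> Derive g x < 0) ->
  g a <= 0 -> g b < 0.
Proof.
  intros Hab Hder Hzero Ha.
  apply (real_induction (fun x => a < x -> g x < 0) a b); [lra|intros; lra| | |lra|lra].
  - intros x Hx Hneg.
    assert (Hx0 : g x <= 0) by (destruct (Req_dec x a) as [->|]; [exact Ha|left; apply Hneg; lra]).
    destruct (neg_right_of_nonpos g x (Hder x ltac:(lra)) (Hzero x ltac:(lra)) Hx0)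
      as [d [Hd Hright]].
    exists d. split; [exact Hd|]. intros y Hy _.
    replace y with (x + (y - x)) by ring. apply Hright. lra.
  - intros x Hx Hbelow _. apply Rnot_le_lt. intros Hx0.
    destruct (pos_left_of_nonneg g x (Hder x ltac:(lra)) (Hzero x ltac:(lra)) Hx0)
      as [d [Hd Hleft]].
    set (h := Rmin d (x - a) / 2).
    assert (0 < Rmin d (x - a) <= d) by (split; [apply Rmin_pos|apply Rmin_l]; lra).
    assert (Rmin d (x - a) <= x - a) by apply Rmin_r.
    assert (0 < g (x - h)) by (apply Hleft; unfold h; lra).
    assert (g (x - h) < 0) by (apply Hbelow; unfold h; lra).
    lra.
Qed.

Lemma nonincreasing_of_Derive_nonpos (f : R -> R) a b :
  a <= b -> (forall x, a <= x <= b -> ex_derive f x /\ Derive f x <= 0) -> f b <= f a.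
Proof.
  intros Hab Hf.
  assert (Hab' : forall x, Rmin a b <= x <= Rmax a b -> a <= x <= b)
    by (rewrite Rmin_left, Rmax_right by lra; auto).
  destruct (MVT_gen f a b (Derive f)) as [c [Hc Hmvt]].
  - intros x Hx. apply Derive_correct, Hf, Hab'. lra.
  - intros x Hx. apply ex_derive_continuity_pt, Hf, Hab', Hx.
  - destruct (Hf c (Hab' c Hc)) as [_ Hneg]. nra.
Qed.

Lemma smooth_on_ex_derive (S : pset) (f : R -> R -> R) (l : list bool) u v :
  smooth_on S f -> S (u, v) ->
  ex_derive (fun x => iterD l f x v) u /\ ex_derive (fun y => iterD l f u y) v.
Proof.
  intros [U [_ [HSU Hsmooth]]] Huv.
  destruct (Hsmooth l (u, v) (HSU _ Huv)) as [Hu [Hv _]]. split; assumption.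
Qed.

Lemma Derive_hawking_mass_profile_at_zero (R1 O A B : R -> R) u :
  ex_derive R1 u -> ex_derive O u -> ex_derive A u -> ex_derive B u ->
  O u <> 0 -> B u = 0 ->
  Derive (fun x => R1 x / 2 * (1 + 4 * / (O x ^ 2) * A x * B x)) u
  = Derive R1 u / 2 + 2 * R1 u * / (O u ^ 2) * A u * Derive B u.
Proof.
  intros HR HO HA HB HO0 HB0. apply is_derive_unique. auto_derive.
  - repeat split; auto.
  - change (fun x => R1 x) with R1. change (fun x => B x) with B.
    rewrite HB0. field. exact HO0.
Qed.

Section MarginallyTrappedTube.

Variables (u0 v0 : R) (G : pset) (Om r Tuu Tuv Tvv : R -> R -> R).
Hypothesis Hsetup : setup u0 v0 G Om r Tuu Tuv Tvv.
Hypothesis HI : assumption_I G Tuu Tuv Tvv.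
Hypothesis HII : assumption_II u0 v0 G.
Hypothesis HV : assumption_V u0 v0 r.
Hypothesis HA : condition_A G Om r Tuv.

Lemma G_past_closed u v u' v' :
  G (u, v) -> 0 <= u' <= u -> v0 <= v' <= v -> G (u', v').
Proof.
  intros HG Hu Hv. destruct Hsetup as (_ & _ & HK & _).
  destruct (HK _ HG) as [[Hu0 Hu1] Hv0]; simpl in *. apply HII. exists (u, v).
  split; [exact HG|]. repeat split; simpl; lra.
Qed.

Lemma G_lower_bounds u v : G (u, v) -> 0 <= u /\ v0 <= v.
Proof. intros HG. destruct Hsetup as (_ & _ & HK & _). destruct (HK _ HG) as [[] ]. auto. Qed.

Lemma Om_pos u v : G (u, v) -> 0 < Om u v.
Proof.
  intros HG. destruct Hsetup as (_ & _ & _ & _ & _ & _ & _ & _ & _ & _ & _ & _ & HOm & _).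
  exact (HOm _ HG).
Qed.

Lemma inv_Om2_pos u v : G (u, v) -> 0 < / (Om u v ^ 2).
Proof. intros HG. pose proof (Om_pos _ _ HG). apply Rinv_0_lt_compat. nra. Qed.

Lemma du_r_scaled_nonincreasing u1 u2 v :
  G (u2, v) -> 0 <= u1 <= u2 ->
  / (Om u2 v ^ 2) * du r u2 v <= / (Om u1 v ^ 2) * du r u1 v.
Proof.
  intros HG Hu. destruct (G_lower_bounds _ _ HG) as [_ Hv].
  destruct Hsetup as (_ & _ & _ & _ & _ & _ & _ & SOm & Sr & _ & _ & _ & _ & Hr & _ & Eu & _).
  apply (nonincreasing_of_Derive_nonpos (fun x => / (Om x v ^ 2) * du r x v)); [lra|].
  intros x Hx. assert (Gx : G (x, v)) by (apply (G_past_closed u2 v); [exact HG|lra|lra]).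
  split.
  - pose proof (Om_pos _ _ Gx).
    pose proof (proj1 (smooth_on_ex_derive _ _ nil _ _ SOm Gx)).
    pose proof (proj1 (smooth_on_ex_derive _ _ (true :: nil) _ _ Sr Gx)).
    simpl in *. auto_derive. repeat split; auto. intros Z. nra.
  - change (at_ (du (fun u v => / (Om u v ^ 2) * du r u v)) (x, v) <= 0).
    rewrite (Eu _ Gx). pose proof (Hr _ Gx). pose proof (inv_Om2_pos _ _ Gx).
    destruct (HI _ Gx) as [HTuu _]. unfold at_ in *; cbn [fst snd] in *.
    assert (0 <= r x v * / (Om x v ^ 2) * Tuu x v) by (repeat apply Rmult_le_pos; lra).
    lra.
Qed.

Lemma dv_r_scaled_nonincreasing u v1 v2 :
  G (u, v2) -> v0 <= v1 <= v2 ->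
  / (Om u v2 ^ 2) * dv r u v2 <= / (Om u v1 ^ 2) * dv r u v1.
Proof.
  intros HG Hv. destruct (G_lower_bounds _ _ HG) as [Hu _].
  destruct Hsetup as (_ & _ & _ & _ & _ & _ & _ & SOm & Sr & _ & _ & _ & _ & Hr & _ & _ & Ev & _).
  apply (nonincreasing_of_Derive_nonpos (fun y => / (Om u y ^ 2) * dv r u y)); [lra|].
  intros y Hy. assert (Gy : G (u, y)) by (apply (G_past_closed u v2); [exact HG|lra|lra]).
  split.
  - pose proof (Om_pos _ _ Gy).
    pose proof (proj2 (smooth_on_ex_derive _ _ nil _ _ SOm Gy)).
    pose proof (proj2 (smooth_on_ex_derive _ _ (false :: nil) _ _ Sr Gy)).
    simpl in *. auto_derive. repeat split; auto. intros Z. nra.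
  - change (at_ (dv (fun u v => / (Om u v ^ 2) * dv r u v)) (u, y) <= 0).
    rewrite (Ev _ Gy). pose proof (Hr _ Gy). pose proof (inv_Om2_pos _ _ Gy).
    destruct (HI _ Gy) as (_ & _ & HTvv). unfold at_ in *; cbn [fst snd] in *.
    assert (0 <= r u y * / (Om u y ^ 2) * Tvv u y) by (repeat apply Rmult_le_pos; lra).
    lra.
Qed.

Lemma du_r_neg u v : G (u, v) -> du r u v < 0.
Proof.
  intros HG. destruct (G_lower_bounds _ _ HG) as [Hu Hv].
  assert (G0 : G (0, v)) by (apply (G_past_closed u v); [exact HG|lra|lra]).
  assert (du r 0 v < 0) by (apply (HV (0, v)); split; simpl; lra).
  pose proof (du_r_scaled_nonincreasing 0 u v HG (conj (Rle_refl 0) Hu)).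
  pose proof (inv_Om2_pos _ _ HG). pose proof (inv_Om2_pos _ _ G0). nra.
Qed.

Lemma dv_r_nonpos_outgoing u v1 v2 :
  G (u, v2) -> v0 <= v1 <= v2 -> dv r u v1 <= 0 -> dv r u v2 <= 0.
Proof.
  intros HG Hv H1.
  destruct (G_lower_bounds _ _ HG) as [Hu _].
  assert (G1 : G (u, v1)) by (apply (G_past_closed u v2); [exact HG|lra|lra]).
  pose proof (dv_r_scaled_nonincreasing u v1 v2 HG Hv).
  pose proof (inv_Om2_pos _ _ HG). pose proof (inv_Om2_pos _ _ G1). nra.
Qed.

Lemma du_dv_r_neg_on_mtt u v : mtt G r (u, v) -> Derive (fun x => dv r x v) u < 0.
Proof.
  intros Hmtt. pose proof Hmtt as (HG & Hdv & Hdu). unfold at_ in Hdv, Hdu; cbn [fst snd] in Hdv, Hdu.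
  destruct Hsetup as (_ & _ & _ & _ & _ & _ & _ & SOm & Sr & _ & _ & _ & _ & Hr & _ & _ & _ & Emu & _).
  assert (Hmass : du (hawking_mass Om r) u v
    = du r u v / 2 + 2 * r u v * / (Om u v ^ 2) * du r u v * Derive (fun x => dv r x v) u).
  { exact (Derive_hawking_mass_profile_at_zero (fun x => r x v) (fun x => Om x v)
      (fun x => du r x v) (fun x => dv r x v) u
      (proj1 (smooth_on_ex_derive _ _ nil _ _ Sr HG))
      (proj1 (smooth_on_ex_derive _ _ nil _ _ SOm HG))
      (proj1 (smooth_on_ex_derive _ _ (true :: nil) _ _ Sr HG))
      (proj1 (smooth_on_ex_derive _ _ (false :: nil) _ _ Sr HG))
      (Rgt_not_eq _ _ (Om_pos _ _ HG)) Hdv). }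
  pose proof (Emu _ HG) as E. pose proof (Hr _ HG) as Hr0. pose proof (HA _ Hmtt) as HAuv.
  destruct (HI _ HG) as (_ & HTuv & _).
  unfold at_ in E, Hr0, HAuv, HTuv; cbn [fst snd] in E, Hr0, HAuv, HTuv.
  rewrite Hmass, Hdv in E.
  set (w := / (Om u v ^ 2)) in *. set (g' := Derive (fun x => dv r x v) u) in *.
  assert (Hw : 0 < w) by apply (inv_Om2_pos _ _ HG).
  assert (Hfactor : 1 / 2 + 2 * r u v * w * g' - 2 * r u v ^ 2 * w * Tuv u v = 0).
  { apply (Rmult_eq_reg_l (du r u v)); [|lra]. lra. }
  assert (Hr_pos : 0 < r u v).
  { destruct (Rle_lt_or_eq_dec _ _ Hr0) as [|Hr_zero]; [assumption|].
    rewrite <- Hr_zero in Hfactor. lra. }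
  assert (Hsmall : Tuv u v * w * (4 * r u v ^ 2) < 1).
  { apply (Rmult_lt_compat_r (4 * r u v ^ 2)) in HAuv; [|nra].
    replace (1 / (4 * r u v ^ 2) * (4 * r u v ^ 2)) with 1 in HAuv by (field; lra). lra. }
  assert (0 < r u v * w) by nra. nra.
Qed.

Lemma dv_r_neg_ingoing u1 u2 v :
  G (u2, v) -> 0 <= u1 < u2 -> dv r u1 v <= 0 -> dv r u2 v < 0.
Proof.
  intros HG Hu H1. destruct (G_lower_bounds _ _ HG) as [_ Hv].
  assert (Gx : forall x, u1 <= x <= u2 -> G (x, v))
    by (intros x Hx; apply (G_past_closed u2 v); [exact HG|lra|lra]).
  destruct Hsetup as (_ & _ & _ & _ & _ & _ & _ & _ & Sr & _).
  apply (neg_of_nonpos_with_downcrossing_zeros (fun x => dv r x v) u1 u2); [lra| | |exact H1].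
  - intros x Hx. exact (proj1 (smooth_on_ex_derive _ _ (false :: nil) _ _ Sr (Gx x Hx))).
  - intros x Hx Hzero. apply du_dv_r_neg_on_mtt.
    split; [|split]; [apply Gx, Hx|exact Hzero|apply du_r_neg, Gx, Hx].
Qed.

Lemma mtt_achronal : achronal (mtt G r).
Proof.
  intros [u1 v1] [u2 v2] (Gp & Hp & _) (Gq & Hq & _) [Hu Hv]; simpl in Hu, Hv.
  destruct (G_lower_bounds _ _ Gp) as [Hu1 Hv1].
  assert (Gmid : G (u1, v2)) by (apply (G_past_closed u2 v2); [exact Gq|lra|lra]).
  assert (Hmid : dv r u1 v2 <= 0)
    by (apply (dv_r_nonpos_outgoing u1 v1 v2 Gmid); [lra|right; exact Hp]).
  pose proof (dv_r_neg_ingoing u1 u2 v2 Gq (conj Hu1 Hu) Hmid).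
  unfold at_ in Hq; simpl in Hq. lra.
Qed.

Lemma mtt_no_ingoing_segment : ~ has_ingoing_segment (mtt G r).
Proof.
  intros (a & b & v & Hab & Hseg).
  destruct (Hseg a ltac:(lra)) as (Ga & Ha & _).
  destruct (Hseg b ltac:(lra)) as (Gb & Hb & _).
  destruct (G_lower_bounds _ _ Ga) as [Ha0 _].
  pose proof (dv_r_neg_ingoing a b v Gb (conj Ha0 Hab) (Req_le _ _ Ha)).
  unfold at_ in Hb; simpl in Hb. lra.
Qed.

End MarginallyTrappedTube.

Lemma achronal_subset (S T : pset) : (forall p, S p -> T p) -> achronal T -> achronal S.
Proof. intros HST HT p q Hp Hq. apply HT; auto. Qed.

Lemma has_ingoing_segment_subset (S T : pset) :
  (forall p, S p -> T p) -> has_ingoing_segment S -> has_ingoing_segment T.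
Proof. intros HST (a & b & v & Hab & Hseg). exists a, b, v. split; [exact Hab|]. auto. Qed.

Theorem proposition3 (u0 v0 : R) (G : pset) (Om r Tuu Tuv Tvv : R -> R -> R) :
  setup u0 v0 G Om r Tuu Tuv Tvv ->
  assumption_I G Tuu Tuv Tvv ->
  assumption_II u0 v0 G ->
  assumption_III u0 v0 r ->
  assumption_IV u0 v0 Om r ->
  assumption_V u0 v0 r ->
  assumption_VI u0 v0 r ->
  assumption_VII u0 v0 G r ->
  (exists p, mtt G r p) ->
  condition_A G Om r Tuv ->
  forall C : pset, conn_component (mtt G r) C ->
    achronal C /\ ~ has_ingoing_segment C.
Proof.
  intros Hsetup HI HII _ _ HV _ _ _ HA C (_ & HC_mtt & _).
  split.
  - apply (achronal_subset C (mtt G r) HC_mtt).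
    exact (mtt_achronal u0 v0 G Om r Tuu Tuv Tvv Hsetup HI HII HV HA).
  - intros Hseg. apply (mtt_no_ingoing_segment u0 v0 G Om r Tuu Tuv Tvv Hsetup HI HII HV HA).
    exact (has_ingoing_segment_subset C (mtt G r) HC_mtt Hseg).
Qed.
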